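(* The relaxed capacity allocation subproblem (defined below) is equivalent to the maximum net-flow problem on the graph $Z$ (defined below). Hence, for any given set of VNF-nodes $\mathcal{U} \subseteq \mathcal{V}$, the optimal value of the relaxed capacity allocation subproblem equals the maximum total net-flow at the sinks in $\mathcal{U} \subseteq \mathcal{N}_{\mathcal{V}}$ of the associated graph $Z$, i.e., $R_3(\mathcal{U}) = F(\mathcal{U})$.
   Context: Setting: a network with node set $\mathcal{V}$ and a set of flows $\mathcal{F}$; flow $f$ has traffic rate $\lambda_f$ and is routed along a fixed path whose node set is $\mathcal{V}_f$; each node $v$ has processing capacity $c_v$. For a given set of VNF-nodes $\mathcal{U} \subseteq \mathcal{V}$, an assignment $\boldsymbol{\lambda}=(\lambda_f^v)\ge 0$ (the portion of flow $f$ processed at node $v$) is feasible, written $\boldsymbol{\lambda}\in\Lambda^{\mathcal{U}}$, if $\sum_{f \in \mathcal{F}} \lambda_f^v \le c_v$ for all $v \in \mathcal{U}$, $\lambda_f^v = 0$ for all $f$ and all $v \notin \mathcal{U}$, and $\sum_{v \in \mathcal{U}} \lambda_f^v \le \lambda_f$ for all $f$. The relaxed capacity allocation subproblem is to maximize $R_2^{\mathcal{U}}(\boldsymbol{\lambda}) = \sum_{f\in\mathcal{F}} \sum_{v \in \mathcal{V}_f \cap \mathcal{U}} \lambda_f^v$ over $\boldsymbol{\lambda}\in\Lambda^{\mathcal{U}}$, and $R_3(\mathcal{U}) = \max_{\boldsymbol{\lambda}\in\Lambda^{\mathcal{U}}} R_2^{\mathcal{U}}(\boldsymbol{\lambda})$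 denotes its optimal value. Graph $Z=(\mathcal{N},\mathcal{L})$: vertices are a source $s$, a flow-vertex $f$ for each $f\in\mathcal{F}$ (set $\mathcal{N}_{\mathcal{F}}$), a vertex $v'$ for each $v\in\mathcal{V}$ (set $\mathcal{N}_{\mathcal{V}'}$), and a vertex $v$ for each $v \in \mathcal{V}$ (set $\mathcal{N}_{\mathcal{V}}$, the sinks). Edges: $(s,f)$ with capacity $\lambda_f$ for every $f$; $(f,v')$ with capacity $\lambda_f$ for every $f$ and every $v\in\mathcal{V}_f$; $(v',v)$ with capacity $c_v$ for every $v$. Let $c(x,y)$ be the edge capacity ($c(x,y)=0$ if $(x,y)\notin\mathcal{L}$). For $\varphi:\mathcal{N}\times\mathcal{N}\to\mathbb{R}_+$ let $\Phi(\mathcal{X},\mathcal{Y})=\sum_{x\in\mathcal{X}}\sum_{y\in\mathcal{Y}}\varphi(x,y)$. An $s$-$\mathcal{V}$ flow is such a $\varphi$ with $\varphi(x,y)\le c(x,y)$ for all pairs, zero net-flow $\Phi(\mathcal{N},\{x\})-\Phi(\{x\},\mathcal{N})=0$ at every vertex other than $s$ and the sinks, non-positive net-flow at $s$, and non-negative net-flow at every sink in $\mathcal{N}_{\mathcal{V}}$; $\overline{\mathcal{F}}$ is the set of all $s$-$\mathcal{V}$ flows. Identifying $\mathcal{U}\subseteq\mathcal{V}$ with the corresponding sinks in $\mathcal{N}_{\mathcal{V}}$, $F(\mathcal{U}) = \max_{\varphi \in \overline{\mathcal{F}}} (\Phi(\mathcal{N}, \mathcal{U}) - \Phi(\mathcal{U},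 \mathcal{N}))$ is the maximum total net-flow at the sinks in $\mathcal{U}$ (the maximum net-flow problem). *)

From mathcomp Require Import all_boot all_order all_algebra.
From mathcomp Require Import reals.
Set Implicit Arguments. Unset Strict Implicit. Unset Printing Implicit Defensive.
Import Order.TTheory GRing.Theory Num.Theory.
Local Open Scope ring_scope.

Section Defs.
Variables (R : realType) (V Fl : finType).
Variables (lam : Fl -> R) (path : Fl -> {set V}) (c : V -> R).

Definition is_max (S : R -> Prop) (r : R) : Prop :=
  S r /\ forall y, S y -> y <= r.

(* an assignment: a f v = lambda_f^v *)
Definition feasible (U : {set V}) (a : Fl -> V -> R) : Prop :=
  [/\ forall f v, 0 <= a f v,
      forall v, v \in U -> \sum_(f : Fl) a f v <= c v,
      forall f v, v \notin U -> a f v = 0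
    & forall f, \sum_(v in U) a f v <= lam f].

Definition R2 (U : {set V}) (a : Fl -> V -> R) : R :=
  \sum_(f : Fl) \sum_(v in path f :&: U) a f v.

Definition R2_values (U : {set V}) (r : R) : Prop :=
  exists a, feasible U a /\ r = R2 U a.

(* vertices: source s, flow-vertices f, vertices v', sink vertices v *)
Definition node : finType := (unit + (Fl + (V + V)))%type.
Definition src : node := inl tt.
Definition fnode (f : Fl) : node := inr (inl f).
Definition vpnode (v : V) : node := inr (inr (inl v)).
Definition vnode (v : V) : node := inr (inr (inr v)).

(* edge capacities; 0 for non-edges *)
Definition cap (x y : node) : R :=
  match x, y with
  | inl _, inr (inl f) => lam f
  | inr (inl f), inr (inr (inl v)) => if v \in path f then lam f else 0
  | inr (inr (inl v)), inr (inr (inr w)) => if v == w then c v else 0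
  | _, _ => 0
  end.

Definition Phi (phi : node -> node -> R) (X Y : {set node}) : R :=
  \sum_(x in X) \sum_(y in Y) phi x y.

Definition netflow (phi : node -> node -> R) (x : node) : R :=
  Phi phi [set: node] [set x] - Phi phi [set x] [set: node].

Definition is_sink (x : node) : bool :=
  match x with inr (inr (inr _)) => true | _ => false end.

Definition sV_flow (phi : node -> node -> R) : Prop :=
  [/\ forall x y, 0 <= phi x y,
      forall x y, phi x y <= cap x y,
      forall x, x != src -> ~~ is_sink x -> netflow phi x = 0,
      netflow phi src <= 0
    & forall v, 0 <= netflow phi (vnode v)].

Definition sinks (U : {set V}) : {set node} := vnode @: U.

Definition netflow_values (U : {set V}) (r : R) : Prop :=
  exists phi, sV_flow phi /\
    r = Phi phi [set: node] (sinks U) - Phi phi (sinks U) [set: node].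

End Defs.

From mathcomp Require Import all_boot all_order all_algebra.
From mathcomp Require Import reals classical_sets topology normedtype derive.
Import Order.TTheory GRing.Theory Num.Theory numFieldNormedType.Exports.
Set Implicit Arguments. Unset Strict Implicit. Unset Printing Implicit Defensive.
Local Open Scope ring_scope.

(* An s-V flow vanishes off the edges of Z, so conservation makes it determined
   by its middle layer (f, v'); restricting that layer to v in U gives a feasible
   assignment with the same objective. Conversely, a feasible assignment masked
   to v in path f is the middle layer of an s-V flow whose net inflow at the
   sinks of U is R2. The two value sets therefore coincide, and R2 attains its
   maximum because the feasible assignments form a compact set (a closed subset
   of a product of segments) on which R2 is continuous. *)

Section LayeredGraph.
Variables (R : realType) (V Fl : finType).
Local Notation node := (node V Fl).
Local Notation src := (src V Fl).
Local Notation fnode := (@fnode V Fl).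
Local Notation vpnode := (@vpnode V Fl).
Local Notation vnode := (@vnode V Fl).
Implicit Types (phi psi : node -> node -> R) (g : Fl -> V -> R).

Lemma sum_node (F : node -> R) : \sum_x F x =
  F src + \sum_f F (fnode f) + \sum_v F (vpnode v) + \sum_v F (vnode v).
Proof.
rewrite !big_sumType /= !addrA; congr (_ + _ + _ + _).
by rewrite (big_pred1 tt) // => -[].
Qed.

Lemma netflowE phi x : netflow phi x = \sum_y phi y x - \sum_y phi x y.
Proof.
rewrite /netflow /Phi big_set1; congr (_ - _).
  by apply: eq_big => [y|y _]; rewrite ?inE ?big_set1.
by apply: eq_bigl => y; rewrite inE.
Qed.

Lemma eq_netflow phi psi : phi =2 psi -> netflow phi =1 netflow psi.
Proof. by move=> eq_phi x; rewrite !netflowE; congr (_ - _); apply: eq_bigr. Qed.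

Lemma netflow_sinks phi (U : {set V}) :
  Phi phi [set: node] (sinks Fl U) - Phi phi (sinks Fl U) [set: node] =
  \sum_(v in U) netflow phi (vnode v).
Proof.
have vnode_inj : {in U &, injective vnode} by move=> v w _ _ [].
rewrite /Phi exchange_big /= !big_imset //=.
under [RHS]eq_bigr do rewrite netflowE.
by rewrite sumrB; congr (_ - _); apply: eq_bigr => v _; apply: eq_bigl => y; rewrite inE.
Qed.

(* On [layered phi] the in- and outflow sums at each vertex reduce by computation. *)
Definition layered phi : node -> node -> R := fun x y =>
  match x, y with
  | inl _, inr (inl _) | inr (inl _), inr (inr (inl _)) => phi x y
  | inr (inr (inl v)), inr (inr (inr w)) => if v == w then phi x y else 0
  | _, _ => 0
  end.

Lemma netflow_layered_src phi :
  netflow (layered phi) src = - \sum_f phi src (fnode f).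
Proof. by rewrite netflowE !sum_node /= !big1_eq !add0r !addr0. Qed.

Lemma netflow_layered_fnode phi f : netflow (layered phi) (fnode f) =
  phi src (fnode f) - \sum_v phi (fnode f) (vpnode v).
Proof. by rewrite netflowE !sum_node /= !big1_eq !add0r !addr0. Qed.

Lemma netflow_layered_vpnode phi v : netflow (layered phi) (vpnode v) =
  \sum_f phi (fnode f) (vpnode v) - phi (vpnode v) (vnode v).
Proof.
rewrite netflowE !sum_node /= !big1_eq !add0r !addr0 -big_mkcond /=.
by rewrite (big_pred1 v) // => w; rewrite eq_sym.
Qed.

Lemma netflow_layered_vnode phi v :
  netflow (layered phi) (vnode v) = phi (vpnode v) (vnode v).
Proof.
rewrite netflowE !sum_node /= !big1_eq !add0r !addr0 subr0 -big_mkcond /=.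
exact: big_pred1_eq.
Qed.

Definition layer_flow g : node -> node -> R := fun x y =>
  match x, y with
  | inl _, inr (inl f) => \sum_v g f v
  | inr (inl f), inr (inr (inl v)) => g f v
  | inr (inr (inl v)), inr (inr (inr w)) => if v == w then \sum_f g f v else 0
  | _, _ => 0
  end.

Lemma layered_layer_flow g : layered (layer_flow g) =2 layer_flow g.
Proof.
by case=> [[]|[f|[v|v]]] [[]|[f'|[v'|w]]] //=; case: eqP => // <-.
Qed.

Lemma netflow_layer_flow g :
  [/\ netflow (layer_flow g) src = - \sum_f \sum_v g f v,
      forall f, netflow (layer_flow g) (fnode f) = 0,
      forall v, netflow (layer_flow g) (vpnode v) = 0
    & forall v, netflow (layer_flow g) (vnode v) = \sum_f g f v].
Proof.
have eq_nf := eq_netflow (layered_layer_flow g); split=> [|f|v|v]; rewrite -eq_nf.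
- by rewrite netflow_layered_src.
- by rewrite netflow_layered_fnode subrr.
- by rewrite netflow_layered_vpnode /= eqxx subrr.
- by rewrite netflow_layered_vnode /= eqxx.
Qed.

End LayeredGraph.

Lemma sum_setI_support (T : finType) (R : nmodType) (A B : {set T}) (F : T -> R) :
  (forall x, x \notin A -> F x = 0) -> \sum_(x in A :&: B) F x = \sum_(x in B) F x.
Proof.
move=> F0; rewrite big_mkcond [RHS]big_mkcond; apply: eq_bigr => x _; rewrite inE.
by case: (boolP (x \in A)) => //= /F0->; case: ifP.
Qed.

Section Network.
Variables (R : realType) (V Fl : finType).
Variables (lam : Fl -> R) (path : Fl -> {set V}) (c : V -> R).
Variable U : {set V}.
Local Notation node := (node V Fl).
Local Notation src := (src V Fl).
Local Notation fnode := (@fnode V Fl).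
Local Notation vpnode := (@vpnode V Fl).
Local Notation vnode := (@vnode V Fl).
Local Notation sV_flow := (sV_flow lam path c).
Local Notation feasible := (feasible lam c U).
Local Notation R2 := (R2 path U).
Local Notation flow_value phi :=
  (Phi phi [set: node] (sinks Fl U) - Phi phi (sinks Fl U) [set: node]).
Implicit Types (phi : node -> node -> R) (a g : Fl -> V -> R).

Section FlowToAssignment.
Variable phi : node -> node -> R.
Hypothesis flow_phi : sV_flow phi.

Lemma sV_flow_cap0 x y : cap lam path c x y = 0 -> phi x y = 0.
Proof.
case: flow_phi => phi_ge0 phi_le_cap _ _ _ cap0.
by apply/le_anti; rewrite phi_ge0 -cap0 phi_le_cap.
Qed.

Lemma sV_flow_layered : layered phi =2 phi.
Proof.
case=> [[]|[f|[v|v]]] [[]|[f'|[v'|w]]] //=; try by rewrite sV_flow_cap0.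
by case: eqP => [<-|/eqP neq_vw] //; rewrite sV_flow_cap0 //= (negbTE neq_vw).
Qed.

Lemma sV_flow_fnode f : phi src (fnode f) = \sum_v phi (fnode f) (vpnode v).
Proof.
case: flow_phi => _ _ conservation _ _; apply/eqP; rewrite -subr_eq0.
by rewrite -netflow_layered_fnode (eq_netflow sV_flow_layered) conservation.
Qed.

Lemma sV_flow_vpnode v : \sum_f phi (fnode f) (vpnode v) = phi (vpnode v) (vnode v).
Proof.
case: flow_phi => _ _ conservation _ _; apply/eqP; rewrite -subr_eq0.
by rewrite -netflow_layered_vpnode (eq_netflow sV_flow_layered) conservation.
Qed.

Definition assign_of_flow : Fl -> V -> R :=
  fun f v => if v \in U then phi (fnode f) (vpnode v) else 0.

Lemma feasible_assign_of_flow : feasible assign_of_flow.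
Proof.
have [phi_ge0 phi_le_cap _ _ _] := flow_phi.
rewrite /assign_of_flow; split=> [f v|v vU|f v /negbTE->//|f].
- by case: ifP.
- under eq_bigr do rewrite vU.
  by rewrite sV_flow_vpnode (le_trans (phi_le_cap _ _)) //= eqxx.
- rewrite (le_trans _ (phi_le_cap src (fnode f))) //= sV_flow_fnode big_mkcond.
  by apply: ler_sum => v _; case: (v \in U).
Qed.

Lemma R2_assign_of_flow : R2 assign_of_flow = flow_value phi.
Proof.
rewrite netflow_sinks.
under [RHS]eq_bigr do
  rewrite -(eq_netflow sV_flow_layered) netflow_layered_vnode -sV_flow_vpnode.
rewrite exchange_big; apply: eq_bigr => f _ /=.
rewrite -[RHS](sum_setI_support (A := path f)) => [|v v_out]; last first.
  by rewrite sV_flow_cap0 //= (negbTE v_out).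
by apply: eq_bigr => v; rewrite inE /assign_of_flow => /andP[_ ->].
Qed.

End FlowToAssignment.

Lemma sV_flow_layer_flow g :
  (forall f v, 0 <= g f v) -> (forall f v, v \notin path f -> g f v = 0) ->
  (forall f, \sum_v g f v <= lam f) -> (forall v, \sum_f g f v <= c v) ->
  sV_flow (layer_flow g).
Proof.
move=> g_ge0 g_path g_lam g_c.
have [nf_src nf_f nf_vp nf_v] := netflow_layer_flow g.
have g_le_lam f v : g f v <= lam f.
  by apply: le_trans (g_lam f); rewrite (bigD1 v) //= lerDl sumr_ge0.
split=> [x y|x y|x||v].
- case: x y => [[]|[f|[v|v]]] [[]|[f'|[v'|w]]] //=; rewrite ?sumr_ge0 //.
  by case: eqP => // _; rewrite sumr_ge0.
- case: x y => [[]|[f|[v|v]]] [[]|[f'|[v'|w]]] //=.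
    by case: ifPn => [_|/g_path->].
  by case: eqP => // <-.
- by case: x => [[]|[f|[v|v]]] // _ _; [exact: nf_f | exact: nf_vp].
- by rewrite nf_src oppr_le0 sumr_ge0 // => f _; rewrite sumr_ge0.
- by rewrite nf_v sumr_ge0.
Qed.

Definition flow_of_assign a : node -> node -> R :=
  layer_flow (fun f v => if v \in path f then a f v else 0).

Lemma sV_flow_of_assign a :
  (forall v, 0 <= c v) -> feasible a -> sV_flow (flow_of_assign a).
Proof.
move=> c_ge0 [a_ge0 a_c a_out a_lam].
have masked_le f v : (if v \in path f then a f v else 0) <= a f v.
  by case: ifP.
apply: sV_flow_layer_flow => [f v|f v /negbTE->//|f|v].
- by case: ifP.
- apply: le_trans (a_lam f); rewrite [leRHS]big_mkcond.
  apply: ler_sum => v _; case: (boolP (v \in U)) => [_|/(a_out f)->].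
    exact: masked_le.
  by case: ifP.
- case: (boolP (v \in U)) => [vU|/a_out a0].
    exact: le_trans (ler_sum _ _) (a_c v vU).
  by rewrite big1 // => f _; rewrite a0; case: ifP.
Qed.

Lemma flow_value_of_assign a : flow_value (flow_of_assign a) = R2 a.
Proof.
have [_ _ _ nf_v] := netflow_layer_flow (fun f v => if v \in path f then a f v else 0).
rewrite netflow_sinks; under eq_bigr do rewrite nf_v.
rewrite exchange_big; apply: eq_bigr => f _ /=.
rewrite -(sum_setI_support (A := path f)) => [|v /negbTE->//].
by apply: eq_bigr => v; rewrite inE => /andP[->].
Qed.

Lemma R2_values_netflow_values r : (forall v, 0 <= c v) ->
  R2_values lam path c U r <-> netflow_values lam path c U r.
Proof.
move=> c_ge0; split=> [[a [feas_a ->]]|[phi [flow_phi ->]]].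
  exists (flow_of_assign a); rewrite flow_value_of_assign.
  by split=> //; exact: sV_flow_of_assign.
exists (assign_of_flow phi); rewrite R2_assign_of_flow //; split=> //.
exact: feasible_assign_of_flow.
Qed.

End Network.

Lemma continuous_sum (R : numFieldType) (T : topologicalType) (I : Type)
    (r : seq I) (P : pred I) (F : I -> T -> R) :
  (forall i, continuous (F i)) -> continuous (fun x => \sum_(i <- r | P i) F i x).
Proof. by move=> F_cont; apply: continuous_big => [|i _]; [exact: add_continuous|]. Qed.

Lemma closed_forall_le (R : realFieldType) (T : topologicalType) (I : Type)
    (L : I -> T -> R) (b : I -> R) :
  (forall i, continuous (L i)) -> closed [set x | forall i, L i x <= b i]%classic.
Proof.
move=> L_cont.
have -> : [set x | forall i, L i x <= b i]%classic =
    (\bigcap_i L i @^-1` [set y | y <= b i])%classic.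
  by apply/seteqP; split=> x /= x_le i; [move=> _; exact: x_le | exact: x_le].
apply: closed_bigI => i _.
exact: (continuous_closedP (L i)).1 (L_cont i) _ (@closed_le _ (b i)).
Qed.

Section OptimalAssignment.
Import ArrowAsProduct.
Local Open Scope classical_set_scope.
Variables (R : realType) (V Fl : finType).
Variables (lam : Fl -> R) (path : Fl -> {set V}) (c : V -> R).
Hypotheses (lam_ge0 : forall f, 0 <= lam f) (c_ge0 : forall v, 0 <= c v).
Variable U : {set V}.
Local Notation feasible := (feasible lam c U).
Local Notation R2 := (R2 path U).
Implicit Types g : Fl * V -> R.

Definition assign_box : set (Fl * V -> R) :=
  [set g | forall i, (if i.2 \in U then `[0, lam i.1] else [set 0]) (g i)].

(* Outside [U] the capacity constraint follows from [c_ge0] and [assign_box]. *)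
Definition capacity_set : set (Fl * V -> R) :=
  [set g | forall v, \sum_f g (f, v) <= c v] `&`
  [set g | forall f, \sum_(v in U) g (f, v) <= lam f].

Lemma feasible_boxP g :
  feasible (curry g) <-> (assign_box `&` capacity_set) g.
Proof.
split=> [[g_ge0 g_c g_out g_lam]|[g_box [g_c g_lam]]].
  split; [move=> [f v] /= | split=> [v|f]; last exact: g_lam].
  - case: ifPn => vU; last exact: g_out.
    rewrite /= in_itv /= g_ge0 /=; apply: le_trans (g_lam f).
    by rewrite (bigD1 v) //= lerDl sumr_ge0 // => w _; exact: g_ge0.
  - case: (boolP (v \in U)) => [/g_c//|vU].
    by rewrite big1 // => f _; exact: g_out.
split=> [f v|v _|f v vU|f]; last exact: g_lam; last 2 first.
- exact: g_c.
- by have := g_box (f, v); rewrite /= (negbTE vU).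
have := g_box (f, v); rewrite /curry /=; case: ifP => [_|_ ->//].
by move=> /= /[!in_itv] /andP[].
Qed.

Lemma assign_box_compact : compact assign_box.
Proof.
apply: (@tychonoff _ (fun _ => R)
  (fun i => if i.2 \in U then `[0, lam i.1] else [set 0])) => i.
by case: ifP => _; [exact: segment_compact | exact: compact_set1].
Qed.

Lemma capacity_set_closed : closed capacity_set.
Proof.
by apply: closedI; apply: closed_forall_le => ?; apply: continuous_sum => ?;
  exact: proj_continuous.
Qed.

Lemma R2_values_max : exists r, is_max (R2_values lam path c U) r.
Proof.
pose A := assign_box `&` capacity_set.
have A_compact : compact A.
  exact: compact_closedI assign_box_compact capacity_set_closed.
have A0 : A (fun _ => 0).
  by apply/feasible_boxP; split=> //= [v _|f]; rewrite big1_eq.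
have R2_cont : continuous (fun g => R2 (curry g)).
  by do 2 (apply: continuous_sum => ?); exact: proj_continuous.
have [g Ag g_max] := compact_EVT_max (ex_intro _ _ A0) A_compact
  (continuous_subspaceT R2_cont).
exists (R2 (curry g)); split=> [|_ [b [feas_b ->]]].
  by exists (curry g); split=> //; apply/feasible_boxP; rewrite inE in Ag.
by apply: (g_max (uncurry b)); rewrite inE; apply/feasible_boxP.
Qed.

End OptimalAssignment.

Lemma is_max_equiv (R : realType) (S T : R -> Prop) r :
  (forall x, S x <-> T x) -> is_max S r -> is_max T r.
Proof. by move=> ST [/ST Tr S_le]; split=> // x /ST; exact: S_le. Qed.

Theorem lemma1 (R : realType) (V Fl : finType)
  (lam : Fl -> R) (path : Fl -> {set V}) (c : V -> R)
  (lam_ge0 : forall f, 0 <= lam f) (c_ge0 : forall v, 0 <= c v)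
  (U : {set V}) :
  exists r : R,
    is_max (R2_values lam path c U) r /\
    is_max (netflow_values lam path c U) r.
Proof.
have [r r_max] := R2_values_max path lam_ge0 c_ge0 U.
exists r; split=> //; apply: is_max_equiv r_max => x.
exact: R2_values_netflow_values.
Qed.
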